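(* Let $\mathfrak g$ be a Lie algebra, $(\mathfrak k,\pi)$ a $\mathfrak g$-Lie algebra (write $\xi\cdot x=\pi(\xi)x$), $r_\pm:\mathfrak k\to\mathfrak g$ linear maps, $\lambda,\nu,\kappa,\mu\in\mathbb R$, and put $r=(r_++r_-)/2$, $\beta=(r_+-r_-)/2$. (i) If $r$ is an extended $\mathcal O$-operator of weight $\lambda$ with extension $\beta$ of mass $(\nu,\kappa,\mu)$ with $\nu\neq0$, then $[x,y]_R:=r_+(x)\cdot y-r_-(y)\cdot x+\lambda[x,y]_{\mathfrak k}$ defines a Lie bracket on $\mathfrak k$. (ii) Suppose $\beta(\xi\cdot x)=[\xi,\beta(x)]_{\mathfrak g}$ for all $\xi\in\mathfrak g$, $x\in\mathfrak k$, and set $[x,y]'_R:=r(x)\cdot y-r(y)\cdot x+\lambda[x,y]_{\mathfrak k}$. Then, for each choice of sign, $r$ and $\beta$ satisfy $[r(x),r(y)]_{\mathfrak g}-r(r(x)\cdot y-r(y)\cdot x+\lambda[x,y]_{\mathfrak k})=-[\beta(x),\beta(y)]_{\mathfrak g}\pm\lambda\beta([x,y]_{\mathfrak k})$ for all $x,y$ if and only if $[r_\pm(x),r_\pm(y)]_{\mathfrak g}=r_\pm([x,y]'_R)$ for all $x,y\in\mathfrak k$.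
   Context: All spaces are finite-dimensional real. For a Lie algebra $\mathfrak g$, a $\mathfrak g$-Lie algebra $(\mathfrak k,\pi)$ is a Lie algebra $(\mathfrak k,[\,,\,]_{\mathfrak k})$ with a Lie algebra homomorphism $\pi:\mathfrak g\to\mathrm{Der}(\mathfrak k)$. For constants $\nu,\kappa,\mu$, a linear map $\beta:\mathfrak k\to\mathfrak g$ is: antisymmetric of mass $\nu$ if $\nu(\beta(x)\cdot y+\beta(y)\cdot x)=0$ for all $x,y\in\mathfrak k$; $\mathfrak g$-invariant of mass $\kappa$ if $\kappa\beta(\xi\cdot x)=\kappa[\xi,\beta(x)]_{\mathfrak g}$ for all $\xi\in\mathfrak g,x\in\mathfrak k$; equivalent of mass $\mu$ if $\mu\beta([x,y]_{\mathfrak k})\cdot z=\mu[\beta(x)\cdot y,z]_{\mathfrak k}$ for all $x,y,z\in\mathfrak k$. If $\beta$ has these three properties, a linear map $r:\mathfrak k\to\mathfrak g$ is an extended $\mathcal O$-operator of weight $\lambda$ with extension $\beta$ of mass $(\nu,\kappa,\mu)$ if $[r(x),r(y)]_{\mathfrak g}-r(r(x)\cdot y-r(y)\cdot x+\lambda[x,y]_{\mathfrak k})=\kappa[\beta(x),\beta(y)]_{\mathfrak g}+\mu\beta([x,y]_{\mathfrak k})$ for all $x,y\in\mathfrak k$. *)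

From HB Require Import structures.
From mathcomp Require Import all_boot all_order all_algebra.
Set Implicit Arguments. Unset Strict Implicit. Unset Printing Implicit Defensive.
Import Order.TTheory GRing.Theory Num.Theory.
Local Open Scope ring_scope.

Section Lie.
Variable R : realFieldType.

Definition is_lie_bracket (V : vectType R) (br : V -> V -> V) : Prop :=
  [/\ (forall (a : R) (x y z : V), br (a *: x + y) z = a *: br x z + br y z),
      (forall (a : R) (x y z : V), br z (a *: x + y) = a *: br z x + br z y),
      (forall x : V, br x x = 0) &
      (forall x y z : V, br x (br y z) + br y (br z x) + br z (br x y) = 0)].

(* (k, brk, pi) is a g-Lie algebra: pi : g -> Der(k) is a Lie algebra
   homomorphism, where Der(k) carries the commutator bracket. *)
Definition is_g_lie_algebra (g k : vectType R) (brg : g -> g -> g)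
  (brk : k -> k -> k) (pi : g -> k -> k) : Prop :=
  [/\ is_lie_bracket brk,
      (forall (a : R) (xi eta : g) (x : k),
          pi (a *: xi + eta) x = a *: pi xi x + pi eta x),
      (forall (a : R) (xi : g) (x y : k),
          pi xi (a *: x + y) = a *: pi xi x + pi xi y),
      (forall (xi : g) (x y : k),
          pi xi (brk x y) = brk (pi xi x) y + brk x (pi xi y)) &
      (forall (xi eta : g) (x : k),
          pi (brg xi eta) x = pi xi (pi eta x) - pi eta (pi xi x))].

Variables (g k : vectType R) (brg : g -> g -> g) (brk : k -> k -> k)
  (pi : g -> k -> k).

Definition antisym_mass (nu : R) (beta : k -> g) : Prop :=
  forall x y : k, nu *: (pi (beta x) y + pi (beta y) x) = 0.

Definition invariant_mass (kappa : R) (beta : k -> g) : Prop :=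
  forall (xi : g) (x : k), kappa *: beta (pi xi x) = kappa *: brg xi (beta x).

Definition equivalent_mass (mu : R) (beta : k -> g) : Prop :=
  forall x y z : k,
    mu *: pi (beta (brk x y)) z = mu *: brk (pi (beta x) y) z.

Definition ext_O_operator (lambda nu kappa mu : R) (r beta : k -> g) : Prop :=
  [/\ antisym_mass nu beta, invariant_mass kappa beta,
      equivalent_mass mu beta &
      forall x y : k,
        brg (r x) (r y) - r (pi (r x) y - pi (r y) x + lambda *: brk x y)
        = kappa *: brg (beta x) (beta y) + mu *: beta (brk x y)].

End Lie.

From HB Require Import structures.
From mathcomp Require Import all_boot all_order all_algebra ssrAC.
Set Implicit Arguments. Unset Strict Implicit. Unset Printing Implicit Defensive.
Import Order.TTheory GRing.Theory Num.Theory.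
Local Open Scope ring_scope.

(* Theorem 2.13. Write r_+ = r + beta and r_- = r - beta, and let
   [x,y]_r = r(x).y - r(y).x + lambda [x,y] be the bracket induced by r.

   (i) Antisymmetry of beta (nu != 0) makes the bracket
   r_+(x).y - r_-(y).x + lambda [x,y] equal to [x,y]_r.  This bracket is
   bilinear and alternating; for the Jacobi identity, [x,[y,z]_r]_r is
   expanded using the extended O-operator identity to rewrite r([y,z]_r).
   The expansion splits into five groups whose cyclic sums vanish
   separately: two by a purely additive cancellation, one by the Jacobi
   identity of k, one by kappa-invariance and one by mu-equivalence of beta.

   (ii) For p = r + b with b linear and g-equivariant, the defect
   [p x, p y] - p([x,y]_r) equals the defect of r plus
   [b x, b y] - lambda b([x,y]); taking b = beta and b = -beta gives the
   two signs. *)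

Definition linear_ax (R : pzRingType) (U V : lmodType R) (f : U -> V) : Prop :=
  forall (a : R) (x y : U), f (a *: x + y) = a *: f x + f y.

Definition bilinear_ax (R : pzRingType) (U V W : lmodType R)
    (f : U -> V -> W) : Prop :=
  (forall y, linear_ax (f^~ y)) /\ (forall x, linear_ax (f x)).

Section LinearAxiom.
Variables (R : pzRingType) (U V : lmodType R) (f : U -> V).
Hypothesis f_lin : linear_ax f.

Lemma lin0 : f 0 = 0.
Proof. by have := f_lin (-1) 0 0; rewrite scaler0 add0r scaleN1r addNr. Qed.

Lemma linD x y : f (x + y) = f x + f y.
Proof. by have := f_lin 1 x y; rewrite !scale1r. Qed.

Lemma linZ a x : f (a *: x) = a *: f x.
Proof. by have := f_lin a x 0; rewrite !addr0 lin0 addr0. Qed.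

Lemma linN x : f (- x) = - f x.
Proof. by rewrite -scaleN1r linZ scaleN1r. Qed.

Lemma linB x y : f (x - y) = f x - f y.
Proof. by rewrite linD linN. Qed.
End LinearAxiom.

Section BilinearAxiom.
Variables (R : pzRingType) (U V W : lmodType R) (f : U -> V -> W).
Hypothesis f_bil : bilinear_ax f.

Lemma bilinDl x y z : f (x + y) z = f x z + f y z.
Proof. exact (linD (proj1 f_bil z) _ _). Qed.
Lemma bilinDr x y z : f x (y + z) = f x y + f x z.
Proof. exact (linD (proj2 f_bil x) _ _). Qed.
Lemma bilinZl a x z : f (a *: x) z = a *: f x z.
Proof. exact (linZ (proj1 f_bil z) _ _). Qed.
Lemma bilinZr a x y : f x (a *: y) = a *: f x y.
Proof. exact (linZ (proj2 f_bil x) _ _). Qed.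
Lemma bilinNl x z : f (- x) z = - f x z.
Proof. exact (linN (proj1 f_bil z) _). Qed.
Lemma bilinNr x y : f x (- y) = - f x y.
Proof. exact (linN (proj2 f_bil x) _). Qed.
Lemma bilinBl x y z : f (x - y) z = f x z - f y z.
Proof. exact (linB (proj1 f_bil z) _ _). Qed.
Lemma bilinBr x y z : f x (y - z) = f x y - f x z.
Proof. exact (linB (proj2 f_bil x) _ _). Qed.
End BilinearAxiom.

Lemma alternating_skew (R : pzRingType) (V W : lmodType R) (f : V -> V -> W) :
  bilinear_ax f -> (forall x, f x x = 0) -> forall x y, f x y = - f y x.
Proof.
move=> f_bil f_alt x y; apply/eqP; rewrite -addr_eq0.
have := f_alt (x + y).
by rewrite (bilinDl f_bil) !(bilinDr f_bil) !f_alt add0r addr0 => ->.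
Qed.

Lemma linear_ax_linear (R : pzRingType) (U V : lmodType R)
    (f : {linear U -> V}) :
  linear_ax f.
Proof. by move=> a x y; rewrite linearP. Qed.

Section LinearAxiomClosure.
Variables (R : comPzRingType) (U V : lmodType R) (f h : U -> V).
Hypotheses (f_lin : linear_ax f) (h_lin : linear_ax h).

Lemma linear_axD : linear_ax (fun x => f x + h x).
Proof. by move=> a x y; rewrite f_lin h_lin scalerDr addrACA. Qed.

Lemma linear_axN : linear_ax (fun x => - f x).
Proof. by move=> a x y; rewrite f_lin opprD scalerN. Qed.

Lemma linear_axZ (c : R) : linear_ax (fun x => c *: f x).
Proof. by move=> a x y; rewrite f_lin scalerDr !scalerA mulrC. Qed.
End LinearAxiomClosure.

Definition cyclic_sum (T : Type) (V : zmodType) (F : T -> T -> T -> V)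
    (x y z : T) : V :=
  F x y z + F y z x + F z x y.

(* A combination of four permuted values of G whose cyclic sum vanishes
   identically; both "quadratic in r" parts of the Jacobiator have this form. *)
Definition cancelling_form (T : Type) (V : zmodType) (G : T -> T -> T -> V)
    (x y z : T) : V :=
  G x y z - G x z y - G y z x + G z y x.

Lemma cyclic_sum_cancelling (T : Type) (V : zmodType) (G : T -> T -> T -> V)
    (x y z : T) :
  cyclic_sum (cancelling_form G) x y z = 0.
Proof.
rewrite /cyclic_sum /cancelling_form !addrA.
rewrite (ACl (((1*11)*(2*8))*((3*5)*(4*10))*((6*12)*(7*9)))) /=.
by rewrite !subrr ?addNr !addr0.
Qed.

Lemma cyclic_sum_combination (R : pzRingType) (T : Type) (V : lmodType R)
    (a b : R) (F F1 F2 F3 F4 F5 : T -> T -> T -> V) :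
  (forall x y z, F x y z =
     F1 x y z + a *: F2 x y z + b *: F3 x y z + F4 x y z + F5 x y z) ->
  forall x y z, cyclic_sum F x y z =
    cyclic_sum F1 x y z + a *: cyclic_sum F2 x y z + b *: cyclic_sum F3 x y z
    + cyclic_sum F4 x y z + cyclic_sum F5 x y z.
Proof.
move=> F_comb x y z; rewrite /cyclic_sum !F_comb !scalerDr !addrA.
by rewrite [LHS](ACl (1*6*11*2*7*12*3*8*13*4*9*14*5*10*15)).
Qed.

Definition o_bracket (R : pzRingType) (g k : lmodType R) (brk : k -> k -> k)
    (pi : g -> k -> k) (lam : R) (r : k -> g) (x y : k) : k :=
  pi (r x) y - pi (r y) x + lam *: brk x y.

Section TwistedHomomorphism.
Variables (R : pzRingType) (g k : lmodType R).
Variables (brg : g -> g -> g) (brk : k -> k -> k) (pi : g -> k -> k).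
Variables (lam : R) (r b : k -> g).
Hypothesis brg_bil : bilinear_ax brg.
Hypothesis brg_alt : forall xi, brg xi xi = 0.
Hypothesis b_lin : linear_ax b.
Hypothesis b_equiv : forall xi x, b (pi xi x) = brg xi (b x).

Local Notation br_r := (o_bracket brk pi lam r).

Lemma defect_shift x y :
  brg (r x + b x) (r y + b y) - (r (br_r x y) + b (br_r x y))
  = (brg (r x) (r y) - r (br_r x y)) + (brg (b x) (b y) - lam *: b (brk x y)).
Proof.
have b_br : b (br_r x y) = brg (r x) (b y) + brg (b x) (r y) + lam *: b (brk x y).
  rewrite /o_bracket (linD b_lin) (linB b_lin) (linZ b_lin) !b_equiv.
  by rewrite [brg (r y) _](alternating_skew brg_bil brg_alt) opprK.
rewrite b_br (bilinDl brg_bil) !(bilinDr brg_bil) !opprD !addrA.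
by rewrite [LHS](ACl (((1*5)*(4*8))*((2*6)*(3*7)))) /= !subrr !addr0 addrA.
Qed.

Lemma twisted_hom_iff (p : k -> g) : (forall z, p z = r z + b z) ->
  (forall x y, brg (r x) (r y) - r (br_r x y)
                = - brg (b x) (b y) + lam *: b (brk x y))
  <-> (forall x y, brg (p x) (p y) = p (br_r x y)).
Proof.
move=> pE; have defect x y : brg (p x) (p y) - p (br_r x y)
    = (brg (r x) (r y) - r (br_r x y)) + (brg (b x) (b y) - lam *: b (brk x y)).
  by rewrite !pE defect_shift.
split=> hom x y; apply/eqP.
  by rewrite -subr_eq0 defect hom addrACA addNr subrr addr0.
move: (defect x y); rewrite hom subrr => /eqP; rewrite eq_sym addr_eq0 => /eqP ->.
by rewrite opprB addrC.
Qed.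
End TwistedHomomorphism.

Section ExtendedOOperator.
Variables (R : comPzRingType) (g k : lmodType R).
Variables (brg : g -> g -> g) (brk : k -> k -> k) (pi : g -> k -> k).
Variables (lam kap mu : R) (r b : k -> g).
Hypothesis brg_bil : bilinear_ax brg.
Hypothesis brg_alt : forall xi, brg xi xi = 0.
Hypothesis brk_bil : bilinear_ax brk.
Hypothesis brk_alt : forall x, brk x x = 0.
Hypothesis brk_jacobi : forall x y z,
  brk x (brk y z) + brk y (brk z x) + brk z (brk x y) = 0.
Hypothesis pi_bil : bilinear_ax pi.
Hypothesis pi_der : forall xi x y,
  pi xi (brk x y) = brk (pi xi x) y + brk x (pi xi y).
Hypothesis pi_hom : forall xi eta x,
  pi (brg xi eta) x = pi xi (pi eta x) - pi eta (pi xi x).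
Hypothesis r_lin : linear_ax r.
Hypothesis b_anti : forall x y, pi (b x) y + pi (b y) x = 0.
Hypothesis b_inv : forall xi x, kap *: b (pi xi x) = kap *: brg xi (b x).
Hypothesis b_eqv : forall x y z,
  mu *: pi (b (brk x y)) z = mu *: brk (pi (b x) y) z.
Hypothesis r_O : forall x y,
  brg (r x) (r y) - r (o_bracket brk pi lam r x y)
  = kap *: brg (b x) (b y) + mu *: b (brk x y).

Local Notation br_r := (o_bracket brk pi lam r).

Lemma b_skew x y : pi (b x) y = - pi (b y) x.
Proof. by apply/eqP; rewrite -addr_eq0 b_anti. Qed.

Lemma o_bracket_shift x y :
  pi (r x + b x) y - pi (r y - b y) x + lam *: brk x y = br_r x y.
Proof.
rewrite /o_bracket (bilinDl pi_bil) (bilinBl pi_bil) opprB.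
by rewrite -[pi (r x) y + _ + _]addrA [pi (b x) y + _]addrA b_anti add0r.
Qed.

Lemma o_bracket_bilinear : bilinear_ax br_r.
Proof.
split=> z a x y; rewrite /o_bracket (linD r_lin) (linZ r_lin).
  rewrite (bilinDl pi_bil) (bilinZl pi_bil) (bilinDr pi_bil) (bilinZr pi_bil).
  rewrite (bilinDl brk_bil) (bilinZl brk_bil) !scalerDr !scalerN !scalerA mulrC.
  by rewrite !opprD !addrA [LHS](ACl (1*3*5*2*4*6)).
rewrite (bilinDl pi_bil) (bilinZl pi_bil) (bilinDr pi_bil) (bilinZr pi_bil).
rewrite (bilinDr brk_bil) (bilinZr brk_bil) !scalerDr !scalerN !scalerA mulrC.
by rewrite !opprD !addrA [LHS](ACl (1*3*5*2*4*6)).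
Qed.

Lemma o_bracket_alt x : br_r x x = 0.
Proof. by rewrite /o_bracket subrr brk_alt scaler0 addr0. Qed.

(* kappa-invariance and antisymmetry of b make the cyclic sum of the
   kappa-terms kappa [b y, b z].x of the Jacobiator vanish. *)
Lemma kappa_cyclic x y z :
  cyclic_sum (fun u v w => kap *: pi (brg (b v) (b w)) u) x y z = 0.
Proof.
have step u v w :
    kap *: pi (b u) (pi (b v) w) = - (kap *: pi (brg (b v) (b w)) u).
  by rewrite b_skew scalerN -(bilinZl pi_bil) b_inv (bilinZl pi_bil).
rewrite /cyclic_sum pi_hom scalerBr !step.
rewrite [brg (b y) (b x)](alternating_skew brg_bil brg_alt) (bilinNl pi_bil).
by rewrite scalerN opprK addrAC subrK addNr.
Qed.

(* mu-equivalence and antisymmetry of b make the cyclic sum of the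
   mu-terms mu b([y,z]).x of the Jacobiator vanish. *)
Lemma mu_cyclic x y z :
  cyclic_sum (fun u v w => mu *: pi (b (brk v w)) u) x y z = 0.
Proof.
rewrite /cyclic_sum [mu *: pi (b (brk z x)) y]b_eqv.
rewrite [mu *: pi (b (brk x y)) z]b_eqv.
rewrite b_skew pi_der [brk y (pi (b x) z)](alternating_skew brk_bil brk_alt).
rewrite [pi (b x) z]b_skew (bilinNl brk_bil) opprK scalerN scalerDr.
by rewrite opprD addrNK addNr.
Qed.

(* Expansion of [x,[y,z]_r]_r, after replacing r([y,z]_r) by means of the
   extended O-operator identity, into five groups of terms. *)
Lemma o_bracket_expand x y z : br_r x (br_r y z) =
  cancelling_form (fun u v w => pi (r u) (pi (r v) w)) x y z
  + lam *: cancelling_form (fun u v w => brk (pi (r u) v) w) x y z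
  + (lam * lam) *: brk x (brk y z)
  + kap *: pi (brg (b y) (b z)) x + mu *: pi (b (brk y z)) x.
Proof.
have r_br : r (br_r y z)
    = brg (r y) (r z) - (kap *: brg (b y) (b z) + mu *: b (brk y z)).
  by rewrite -r_O opprB addrC subrK.
rewrite {1}/o_bracket r_br (bilinBl pi_bil) (bilinDl pi_bil) !(bilinZl pi_bil).
rewrite pi_hom.
rewrite /o_bracket (bilinDr pi_bil) (bilinBr pi_bil) (bilinZr pi_bil) pi_der.
rewrite (bilinDr brk_bil) (bilinBr brk_bil) (bilinZr brk_bil).
rewrite [brk y (pi (r x) z)](alternating_skew brk_bil brk_alt).
rewrite [brk x (pi (r y) z)](alternating_skew brk_bil brk_alt).
rewrite [brk x (pi (r z) y)](alternating_skew brk_bil brk_alt).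
rewrite /cancelling_form !scalerDr !scalerN scalerA !opprD !opprK !addrA.
by rewrite [LHS](ACl (1*2*5*6*3*4*9*10*11*7*8)).
Qed.

Lemma o_bracket_jacobi x y z :
  br_r x (br_r y z) + br_r y (br_r z x) + br_r z (br_r x y) = 0.
Proof.
have brk_cyclic : cyclic_sum (fun u v w => brk u (brk v w)) x y z = 0.
  exact: brk_jacobi.
change (cyclic_sum (fun u v w => br_r u (br_r v w)) x y z = 0).
rewrite (cyclic_sum_combination o_bracket_expand) !cyclic_sum_cancelling.
by rewrite brk_cyclic kappa_cyclic mu_cyclic !scaler0 !addr0.
Qed.
End ExtendedOOperator.

Lemma lie_bracketP (R : realFieldType) (V : vectType R) (br : V -> V -> V) :
  is_lie_bracket br <->
  [/\ bilinear_ax br, forall x, br x x = 0 &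
      forall x y z, br x (br y z) + br y (br z x) + br z (br x y) = 0].
Proof.
split=> [[brl brr br_alt br_jac] | [[brl brr] br_alt br_jac]].
  by split=> //; split=> [z a x y | z a x y]; [exact: brl | exact: brr].
by split=> // [a x y z | a x y z]; [exact: brl | exact: brr].
Qed.

Lemma lie_bracket_ext (R : realFieldType) (V : vectType R)
    (br1 br2 : V -> V -> V) :
  br1 =2 br2 -> is_lie_bracket br2 -> is_lie_bracket br1.
Proof.
by move=> e [brl brr br_alt br_jac]; split=> *; rewrite ?e.
Qed.

Lemma g_lie_algebra_axioms (R : realFieldType) (g k : vectType R)
    (brg : g -> g -> g) (brk : k -> k -> k) (pi : g -> k -> k) :
  is_g_lie_algebra brg brk pi ->
  [/\ is_lie_bracket brk, bilinear_ax pi,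
      forall xi x y, pi xi (brk x y) = brk (pi xi x) y + brk x (pi xi y) &
      forall xi eta x, pi (brg xi eta) x = pi xi (pi eta x) - pi eta (pi xi x)].
Proof.
case=> brk_lie pil pir pi_der pi_hom; split=> //.
by split=> [x a xi eta | xi a x y]; [exact: pil | exact: pir].
Qed.

Lemma half_sum_add (R : numFieldType) (V : lmodType R) (p m : V) :
  p = 2^-1 *: (p + m) + 2^-1 *: (p - m).
Proof.
rewrite -scalerDr addrACA subrr addr0 -mulr2n -scaler_nat scalerA mulVf.
  by rewrite scale1r.
by rewrite pnatr_eq0.
Qed.

Lemma half_sum_sub (R : numFieldType) (V : lmodType R) (p m : V) :
  m = 2^-1 *: (p + m) - 2^-1 *: (p - m).
Proof.
rewrite -scalerBr opprB addrC addrA subrK -mulr2n -scaler_nat scalerA mulVf.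
  by rewrite scale1r.
by rewrite pnatr_eq0.
Qed.

Theorem theorem2p13 (R : realFieldType) (g k : vectType R)
  (brg : g -> g -> g) (brk : k -> k -> k) (pi : g -> k -> k)
  (rp rm : {linear k -> g}) :
  is_lie_bracket brg -> is_g_lie_algebra brg brk pi ->
  let r := fun x : k => 2^-1 *: (rp x + rm x) in
  let beta := fun x : k => 2^-1 *: (rp x - rm x) in
  (* (i) *)
  (forall lambda nu kappa mu : R, nu != 0 ->
     ext_O_operator brg brk pi lambda nu kappa mu r beta ->
     is_lie_bracket (fun x y : k => pi (rp x) y - pi (rm y) x + lambda *: brk x y))
  /\
  (* (ii) *)
  (forall lambda : R,
     (forall (xi : g) (x : k), beta (pi xi x) = brg xi (beta x)) ->
     let brR' := fun x y : k => pi (r x) y - pi (r y) x + lambda *: brk x y in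
     ((forall x y : k,
         brg (r x) (r y) - r (pi (r x) y - pi (r y) x + lambda *: brk x y)
         = - brg (beta x) (beta y) + lambda *: beta (brk x y))
      <-> (forall x y : k, brg (rp x) (rp y) = rp (brR' x y)))
     /\
     ((forall x y : k,
         brg (r x) (r y) - r (pi (r x) y - pi (r y) x + lambda *: brk x y)
         = - brg (beta x) (beta y) - lambda *: beta (brk x y))
      <-> (forall x y : k, brg (rm x) (rm y) = rm (brR' x y)))).
Proof.
move=> /lie_bracketP[brg_bil brg_alt _].
move=> /g_lie_algebra_axioms[brk_lie pi_bil pi_der pi_hom].
have /lie_bracketP[brk_bil brk_alt brk_jacobi] := brk_lie.
move=> r beta.
have rp_lin := linear_ax_linear rp; have rm_lin := linear_ax_linear rm.
have r_lin : linear_ax r := linear_axZ (linear_axD rp_lin rm_lin) 2^-1.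
have beta_lin : linear_ax beta :=
  linear_axZ (linear_axD rp_lin (linear_axN rm_lin)) 2^-1.
have rpE z : rp z = r z + beta z := half_sum_add (rp z) (rm z).
have rmE z : rm z = r z - beta z := half_sum_sub (rp z) (rm z).
split=> [lam nu kap mu nu0 [beta_anti_nu beta_inv beta_eqv r_O] |
         lam beta_equiv brR'].
  have beta_anti x y : pi (beta x) y + pi (beta y) x = 0.
    by have /eqP := beta_anti_nu x y; rewrite scaler_eq0 (negbTE nu0) => /eqP.
  apply: (@lie_bracket_ext _ _ _ (o_bracket brk pi lam r)).
    by move=> x y; rewrite rpE rmE o_bracket_shift.
  apply/lie_bracketP; split.
  - exact: o_bracket_bilinear.
  - exact: o_bracket_alt.
  - exact: (o_bracket_jacobi brg_bil brg_alt brk_bil brk_alt brk_jacobi pi_bil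
      pi_der pi_hom beta_anti beta_inv beta_eqv r_O).
split.
  exact (twisted_hom_iff brk lam brg_bil brg_alt beta_lin beta_equiv rpE).
have nbeta_equiv xi x : - beta (pi xi x) = brg xi (- beta x).
  by rewrite beta_equiv (bilinNr brg_bil).
apply: iff_trans (twisted_hom_iff brk lam brg_bil brg_alt (linear_axN beta_lin)
  nbeta_equiv rmE).
by split=> hom x y; rewrite hom (bilinNl brg_bil) (bilinNr brg_bil) opprK scalerN.
Qed.
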